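(* Let $V\subseteq\mathcal V$ be finite, $\mathcal E\in\mathit{DProg}(V)$, $W\subseteq\mathcal V$ finite and $Q$ a projector on $\mathcal H_W$. Then $wp^p.\mathcal E.Q=E(\mathcal E^\dagger(Q))$, $wlp^p.\mathcal E.Q=\mathcal N(\mathcal E^\dagger(Q^\perp))$, and $sp^p.\mathcal E.Q=\lceil\mathcal E(Q)\rceil$.
   Context: $\mathcal V$ is a countably infinite set of qubit variables; $\mathcal H_V=\bigotimes_{q\in V}\mathcal H_q$. $\mathcal D(\mathcal H)$: partial density operators; projectors are identified with their image subspaces, ordered by inclusion $\sqsubseteq$; $Q^\perp=I-Q$. $\mathit{DProg}(V)$: completely positive trace-nonincreasing super-operators on $\mathcal L(\mathcal H_V)$; $\mathcal E^\dagger$ its adjoint (${\rm tr}(\mathcal E(A)B)={\rm tr}(A\mathcal E^\dagger(B))$). Convention: operators and super-operators are implicitly extended to $\mathcal H_{V\cup W}$ (and larger systems) by tensoring with identities; all projectors below are regarded on $\mathcal H_{V\cup W}$. $E(A)=\{|\psi\rangle:A|\psi\rangle=|\psi\rangle\}$; $\mathcal N(B)=\{|\psi\rangle:\langle\psi|B|\psi\rangle=0\}$; $\lceil\rho\rceil$ is the support of a positive $\rho$ (span of eigenvectors with nonzero eigenvalues). For projectors $P,Q$: $\mathcal E\models_{tot}(P,Q)$ iff for all finite $X\supseteq V\cup W$ and $\rho\in\mathcal D(\mathcal H_X)$, ${\rm tr}(P\rho)\le{\rm tr}(Q\mathcal E(\rho))$; $\mathcal E\models_{par}(P,Q)$ iff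 for all such $X,\rho$, ${\rm tr}(P\rho)\le{\rm tr}(Q\mathcal E(\rho))+{\rm tr}(\rho)-{\rm tr}(\mathcal E(\rho))$. $wp^p.\mathcal E.Q$ is the largest projector $P$ (w.r.t. $\sqsubseteq$) with $\mathcal E\models_{tot}(P,Q)$; $wlp^p.\mathcal E.Q$ the largest projector $P$ with $\mathcal E\models_{par}(P,Q)$; $sp^p.\mathcal E.Q$ the smallest projector $R$ with $\mathcal E\models_{par}(Q,R)$. *)

From HB Require Import structures.
From mathcomp Require Import all_boot all_order all_algebra.
From mathcomp Require Import finmap.

Set Implicit Arguments.
Unset Strict Implicit.
Unset Printing Implicit Defensive.

Import Order.TTheory GRing.Theory Num.Theory.
Local Open Scope ring_scope.


(* Qubit variables: nat (countably infinite).  A finite set of variables is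
   X : {fset nat}.  The computational basis of H_X is indexed by the
   classical assignments X -> bool. *)
Definition Bs (X : {fset nat}) := {ffun X -> bool}.
Definition dim (X : {fset nat}) : nat := #|{: Bs X}|.

Definition Op (C : numClosedFieldType) (X : {fset nat}) := 'M[C]_(dim X).
Definition Vec (C : numClosedFieldType) (X : {fset nat}) := 'cV[C]_(dim X).

Definition rk (X : {fset nat}) (s : Bs X) : 'I_(dim X) := enum_rank s.
Definition ev (X : {fset nat}) (i : 'I_(dim X)) : Bs X := enum_val i.

(* restriction of an assignment on X to V (meaningful when V is a subset of X) *)
Definition rest (V X : {fset nat}) (s : Bs X) : Bs V :=
  [ffun v : V => odflt false (omap s (insub (val v)))].
Arguments rest V {X} s.

Definition comb (V X : {fset nat}) (a : Bs V) (s : Bs X) : Bs X :=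
  [ffun x : X => odflt (s x) (omap a (insub (val x)))].

Definition hadj (C : numClosedFieldType) m n (A : 'M[C]_(m, n)) : 'M[C]_(n, m) :=
  map_mx Num.conj A^T.

(* implicit extension A (x) I_{X \ V} of an operator A on H_V to H_X *)
Definition ext (C : numClosedFieldType) (V X : {fset nat}) (A : Op C V) : Op C X :=
  \matrix_(i, j)
    (if [forall x : X, (val x \notin V) ==> (ev i x == ev j x)]
     then A (rk (rest V (ev i))) (rk (rest V (ev j))) else 0).
Arguments ext {C} V X A.

(* implicit extension E (x) id_{X \ V} of a super-operator E on L(H_V) to
   L(H_X): E acts on each (V-)block of rho indexed by the X\V-parts. *)
Definition sext (C : numClosedFieldType) (V X : {fset nat})
    (E : Op C V -> Op C V) (rho : Op C X) : Op C X :=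
  \matrix_(i, j)
    E (\matrix_(a, b) rho (rk (comb (ev a) (ev i))) (rk (comb (ev b) (ev j))))
      (rk (rest V (ev i))) (rk (rest V (ev j))).
Arguments sext {C} V X E rho.

Definition psd (C : numClosedFieldType) n (A : 'M[C]_n) : Prop :=
  forall x : 'cV[C]_n, 0 <= (hadj x *m A *m x) 0 0.
Definition pdens (C : numClosedFieldType) n (A : 'M[C]_n) : Prop :=
  psd A /\ \tr A <= 1.

(* DProg(V): completely positive, trace-nonincreasing super-operators
   (complete positivity = positivity of E (x) id on every finite
   register extension H_X, X containing V). *)
Definition is_DProg (C : numClosedFieldType) (V : {fset nat})
    (E : Op C V -> Op C V) : Prop :=
  [/\ (forall (a : C) (A B : Op C V), E (a *: A + B) = a *: E A + E B),
      (forall X : {fset nat}, (V `<=` X)%fset ->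
         forall rho : Op C X, psd rho -> psd (sext V X E rho)) &
      (forall rho : Op C V, psd rho -> \tr (E rho) <= \tr rho)].

Definition proj (C : numClosedFieldType) n (P : 'M[C]_n) : Prop :=
  P *m P = P /\ hadj P = P.
Definition img (C : numClosedFieldType) n (P : 'M[C]_n) (x : 'cV[C]_n) : Prop :=
  exists y : 'cV[C]_n, x = P *m y.
Definition sp_eq (C : numClosedFieldType) n (S T : 'cV[C]_n -> Prop) : Prop :=
  forall x, S x <-> T x.
Definition psub (C : numClosedFieldType) n (P P' : 'M[C]_n) : Prop :=
  forall x, img P x -> img P' x.

Definition fixsp (C : numClosedFieldType) n (A : 'M[C]_n) (x : 'cV[C]_n) : Prop :=
  A *m x = x.
Definition nullsp (C : numClosedFieldType) n (B : 'M[C]_n) (x : 'cV[C]_n) : Prop :=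
  (hadj x *m B *m x) 0 0 = 0.
Definition supp (C : numClosedFieldType) n (rho : 'M[C]_n) (x : 'cV[C]_n) : Prop :=
  exists (k : nat) (vs : 'I_k -> 'cV[C]_n) (cs : 'I_k -> C),
    (forall i, vs i != 0 /\ exists l : C, l != 0 /\ rho *m vs i = l *: vs i) /\
    x = \sum_(i < k) cs i *: vs i.

(* Hoare triples; P, Q are projectors on H_Y with Y = V `|` W (V = variables
   of the program, W = variables of the assertions); everything is extended
   to an arbitrary finite X containing Y. *)
Definition sat_tot (C : numClosedFieldType) (V W : {fset nat})
    (E : Op C V -> Op C V) (P Q : Op C (V `|` W)%fset) : Prop :=
  forall X : {fset nat}, (V `|` W `<=` X)%fset -> forall rho : Op C X, pdens rho ->
    \tr (ext (V `|` W)%fset X P *m rho) <= \tr (ext (V `|` W)%fset X Q *m sext V X E rho).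

Definition sat_par (C : numClosedFieldType) (V W : {fset nat})
    (E : Op C V -> Op C V) (P Q : Op C (V `|` W)%fset) : Prop :=
  forall X : {fset nat}, (V `|` W `<=` X)%fset -> forall rho : Op C X, pdens rho ->
    \tr (ext (V `|` W)%fset X P *m rho) <=
    \tr (ext (V `|` W)%fset X Q *m sext V X E rho) + \tr rho - \tr (sext V X E rho).

Definition largest_proj (C : numClosedFieldType) n (Pr : 'M[C]_n -> Prop)
    (P : 'M[C]_n) : Prop :=
  [/\ proj P, Pr P & forall P', proj P' -> Pr P' -> psub P' P].
Definition smallest_proj (C : numClosedFieldType) n (Pr : 'M[C]_n -> Prop)
    (P : 'M[C]_n) : Prop :=
  [/\ proj P, Pr P & forall P', proj P' -> Pr P' -> psub P P'].

(* Every condition on an arbitrary register X containing Y = V `|` W reduces to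
   Y itself: the trace of an extended operator against rho only sees the
   partial trace of rho onto Y, and the partial trace commutes with the lifted
   program.  On Y write G for the lifting of E and F for that of E^dagger, so
   that tr (M (G rho)) = tr ((F M) rho).  For a projector Q both F Q and
   I - F Q are positive, and for any such effect T the largest projector P with
   tr (P rho) <= tr (T rho) on all states is the projector onto the fixed space
   of T: a vector fixed by P, tested as a pure state, is fixed by T.  This gives
   wp with T = F Q, and wlp with T = I - F Q^perp, since
   tr (Q G rho) + tr rho - tr (G rho) = tr ((I - F Q^perp) rho) and the fixed
   space of I - F Q^perp is the null space of F Q^perp.  For sp, let R project
   onto the range of G Q: tr ((F R^perp) Q) = tr (R^perp G Q) = 0 forces
   (F R^perp) Q = 0, whence Q <= I - F R^perp; conversely, testing a triple
   {Q} E {R'} on a multiple of Q gives tr (R'^perp G Q) <= 0, so R' contains the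
   range of G Q. *)

From Pilot Require Import Defs.
From HB Require Import structures.
From mathcomp Require Import all_boot all_order all_algebra.
From mathcomp Require Import finmap.
From mathcomp Require Import sesquilinear spectral ring.

Set Implicit Arguments.
Unset Strict Implicit.
Unset Printing Implicit Defensive.

Import Order.TTheory GRing.Theory Num.Theory.
Local Open Scope ring_scope.
Local Open Scope sesquilinear_scope.

(** * Assignments and their sums *)

Section Assignments.
Variables (V X : {fset nat}).

Lemma combE (a : Bs V) (s : Bs X) (x : X) :
  comb a s x = if insub (val x) is Some v then a v else s x.
Proof. by rewrite ffunE; case: insub. Qed.

Lemma restE (s : Bs X) (v : V) :
  rest V s v = if insub (val v) is Some x then s x else false.
Proof. by rewrite ffunE; case: insub. Qed.

Lemma comb_comb (a b : Bs V) (s : Bs X) : comb a (comb b s) = comb a s.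
Proof. by apply/ffunP => x; rewrite !combE; case: insubP. Qed.

Lemma comb_rest (s : Bs X) : comb (rest V s) s = s.
Proof.
apply/ffunP => x; rewrite combE.
case: insubP => // v _ vx; rewrite restE insubT /=; first by rewrite vx; exact: valP.
by move=> h; congr (s _); apply: val_inj.
Qed.

Lemma comb_rest_comb (a : Bs V) (s : Bs X) : comb (rest V s) (comb a s) = s.
Proof. by rewrite comb_comb comb_rest. Qed.

Definition agree_off (s t : Bs X) :=
  [forall x : X, (val x \notin V) ==> (s x == t x)].

Lemma agree_offC (s t : Bs X) : agree_off s t = agree_off t s.
Proof. by apply/forallP/forallP => H x; move: (H x); rewrite eq_sym. Qed.

Lemma agree_offE (s t : Bs X) : agree_off s t = (s == comb (rest V s) t).
Proof.
apply/forallP/eqP => [H|->].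
  apply/ffunP => x; rewrite combE; case: insubP => [v _ vx|xV].
    rewrite restE insubT /=; first by rewrite vx; exact: valP.
    by move=> h; congr (s _); apply: val_inj.
  by move: (H x); rewrite xV => /eqP.
by move=> x; apply/implyP => xV; rewrite combE insubF //; exact/negbTE.
Qed.

Lemma agree_off_comb (a : Bs V) (s t : Bs X) : agree_off (comb a s) t = agree_off s t.
Proof.
apply/forallP/forallP => H x; move: (H x); rewrite combE;
  by case: insubP => //= v _ vx; rewrite -vx (valP v).
Qed.

Hypothesis VX : (V `<=` X)%fset.

Lemma rest_comb (a : Bs V) (s : Bs X) : rest V (comb a s) = a.
Proof.
apply/ffunP => v; rewrite restE.
have vX : val v \in X by apply: (fsubsetP VX); exact: valP.
rewrite insubT combE /= insubT /=; first exact: valP.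
by move=> h; congr (a _); apply: val_inj.
Qed.

End Assignments.

Arguments agree_off V {X} s t.

Lemma rest_id (Y : {fset nat}) (s : Bs Y) : rest Y s = s.
Proof.
apply/ffunP => v; rewrite restE insubT /=; first exact: valP.
by move=> h; congr (s _); apply: val_inj.
Qed.

Lemma comb_id (V : {fset nat}) (a s : Bs V) : comb a s = a.
Proof. by rewrite -[RHS](rest_comb (fsubset_refl V) a s) rest_id. Qed.

Lemma rkK (X : {fset nat}) (s : Bs X) : ev (rk s) = s.
Proof. exact: enum_rankK. Qed.

Lemma evK (X : {fset nat}) (i : 'I_(Defs.dim X)) : rk (ev i) = i.
Proof. exact: enum_valK. Qed.

Section Sums.
Variable R : zmodType.

Lemma sum_ord_Bs (X : {fset nat}) (F : 'I_(Defs.dim X) -> R) :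
  \sum_(i < Defs.dim X) F i = \sum_(s : Bs X) F (rk s).
Proof.
by rewrite (reindex (@rk X)) //; exists (@ev X) => i _; rewrite ?rkK ?evK.
Qed.

Lemma sum_fibers (Y X : {fset nat}) (G : Bs X -> Bs Y -> R) :
  \sum_(b : Bs Y) \sum_(r : Bs X | rest Y r == b) G r b = \sum_(r : Bs X) G r (rest Y r).
Proof.
rewrite [RHS](partition_big (rest Y) predT) //=.
by apply: eq_bigr => b _; apply: eq_bigr => r /eqP ->.
Qed.

Variables (V X : {fset nat}).
Hypothesis VX : (V `<=` X)%fset.

Lemma sum_agree_off (t : Bs X) (f : Bs X -> R) :
  \sum_(s : Bs X) (if agree_off V s t then f s else 0) = \sum_(a : Bs V) f (comb a t).
Proof.
transitivity (\sum_(s : Bs X) \sum_(a : Bs V) (if s == comb a t then f s else 0)).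
  apply: eq_bigr => s _; rewrite (bigD1 (rest V s)) //= big1 ?addr0; last first.
    by move=> a /negbTE ne; case: eqP => // e; move: ne; rewrite e rest_comb // eqxx.
  by rewrite agree_offE.
rewrite exchange_big /=; apply: eq_bigr => a _.
by rewrite (bigD1 (comb a t)) //= eqxx big1 ?addr0 // => s /negbTE ->.
Qed.

Lemma reindex_rest_comb (a a' : Bs V) (h : Bs X -> R) :
  \sum_(r : Bs X | rest V r == a) h (comb a' r) =
  \sum_(r : Bs X | rest V r == a') h r.
Proof.
symmetry; rewrite (reindex_onto (comb a') (comb a)) /=; last first.
  by move=> r /eqP <-; rewrite comb_rest_comb.
apply: eq_bigl => r; rewrite rest_comb // eqxx /=.
by apply/eqP/eqP => [<-|<-]; rewrite ?rest_comb ?comb_rest_comb.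
Qed.

Lemma sum_comb_rest (F : Bs X -> Bs V -> R) :
  \sum_(s : Bs X) \sum_(c : Bs V) F s c =
  \sum_(l : Bs X) \sum_(a : Bs V) F (comb a l) (rest V l).
Proof.
rewrite !pair_big /=.
rewrite (reindex (fun p : Bs X * Bs V => (comb p.2 p.1, rest V p.1))) //=.
exists (fun p : Bs X * Bs V => (comb p.2 p.1, rest V p.1)) => -[l a] _ /=;
  by rewrite rest_comb // comb_rest_comb.
Qed.

End Sums.

Section NestedAssignments.
Variables (V Y X : {fset nat}).
Hypotheses (VY : (V `<=` Y)%fset) (YX : (Y `<=` X)%fset).

Lemma rest_rest (r : Bs X) : rest V (rest Y r) = rest V r.
Proof.
apply/ffunP => v; rewrite !restE.
have vY : val v \in Y by apply: (fsubsetP VY); exact: valP.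
have vX : val v \in X by apply: (fsubsetP YX).
by rewrite insubT /= restE /= insubT /=.
Qed.

Lemma comb_nested (d : Bs V) (b : Bs Y) (r : Bs X) :
  comb d (comb b r) = comb (comb d b) r.
Proof.
apply/ffunP => x; rewrite !combE.
case xV: (fsval x \in V).
  have xY : fsval x \in Y by apply: (fsubsetP VY).
  by rewrite insubT /= (insubT (fun n => n \in Y) xY) /= combE /= insubT /=.
rewrite insubF //=; case xY: (fsval x \in Y); last by rewrite insubF.
by rewrite (insubT (fun n => n \in Y) xY) /= combE /= insubF.
Qed.

End NestedAssignments.

Lemma matrix_BsP (C : numClosedFieldType) (X : {fset nat}) (A B : Op C X) :
  (forall s t, A (rk s) (rk t) = B (rk s) (rk t)) -> A = B.
Proof. by move=> H; apply/matrixP => i j; rewrite -(evK i) -(evK j) H. Qed.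

Lemma mxtrace_mul_Bs (C : numClosedFieldType) (X : {fset nat}) (A B : Op C X) :
  \tr (A *m B) = \sum_(s : Bs X) \sum_(t : Bs X) A (rk s) (rk t) * B (rk t) (rk s).
Proof.
rewrite /mxtrace sum_ord_Bs; apply: eq_bigr => s _.
by rewrite mxE sum_ord_Bs.
Qed.

(** * Super-operators and their lifting *)

Section SuperOperators.
Variables (C : numClosedFieldType) (n : nat).

Definition superop_linear (E : 'M[C]_n -> 'M[C]_n) :=
  forall (a : C) (A B : 'M[C]_n), E (a *: A + B) = a *: E A + E B.

Variable E : 'M[C]_n -> 'M[C]_n.
Hypothesis linE : superop_linear E.

Lemma superop0 : E 0 = 0.
Proof.
have h := linE 1 0 0; rewrite !scale1r addr0 in h.
by apply: (addrI (E 0)); rewrite addr0 -h.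
Qed.

Lemma superopD A B : E (A + B) = E A + E B.
Proof. by have := linE 1 A B; rewrite !scale1r. Qed.

Lemma superopZ a A : E (a *: A) = a *: E A.
Proof. by rewrite -[a *: A]addr0 linE superop0 addr0. Qed.

Lemma superop_sum (I : Type) (r : seq I) (P : pred I) (F : I -> 'M[C]_n) :
  E (\sum_(i <- r | P i) F i) = \sum_(i <- r | P i) E (F i).
Proof.
elim/big_rec2: _ => [|i A B _ <-]; [exact: superop0 | exact: superopD].
Qed.

Lemma superop_entry (A : 'M[C]_n) p q :
  E A p q = \sum_(c < n) \sum_(d < n) A c d * E (delta_mx c d) p q.
Proof.
rewrite {1}(matrix_sum_delta A) superop_sum summxE.
apply: eq_bigr => c _; rewrite superop_sum summxE; apply: eq_bigr => d _.
by rewrite superopZ mxE.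
Qed.

End SuperOperators.

Lemma mxtrace_delta_mul (C : numClosedFieldType) n (i j : 'I_n) (A : 'M[C]_n) :
  \tr (delta_mx j i *m A) = A i j.
Proof.
rewrite /mxtrace (bigD1 j) //= big1 ?addr0.
  rewrite mxE (bigD1 i) //= big1 ?addr0 ?mxE ?eqxx ?mul1r //.
  by move=> k /negbTE nk; rewrite mxE nk andbF mul0r.
by move=> k /negbTE nk; rewrite mxE big1 // => l _; rewrite mxE nk mul0r.
Qed.

Lemma adjoint_entry (C : numClosedFieldType) n (E Ed : 'M[C]_n -> 'M[C]_n)
    (B : 'M[C]_n) i j :
  (forall A B, \tr (E A *m B) = \tr (A *m Ed B)) ->
  Ed B i j = \sum_(a < n) \sum_(b < n) E (delta_mx j i) a b * B b a.
Proof.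
move=> dualE; rewrite -mxtrace_delta_mul -dualE /mxtrace.
by apply: eq_bigr => a _; rewrite mxE.
Qed.

Lemma sext_linear (C : numClosedFieldType) (V X : {fset nat}) (E : Op C V -> Op C V) :
  superop_linear E -> superop_linear (sext V X E).
Proof.
move=> linE c A B; apply/matrixP => i j; rewrite !mxE.
set MA := \matrix_(a, b) A _ _; set MB := \matrix_(a, b) B _ _.
have -> : \matrix_(a, b) (c *: A + B) (rk (comb (ev a) (ev i))) (rk (comb (ev b) (ev j)))
          = c *: MA + MB by apply/matrixP => a b; rewrite !mxE.
by rewrite linE !mxE.
Qed.

Section Lifting.
Variables (C : numClosedFieldType) (V X : {fset nat}).
Variables (E Ed : Op C V -> Op C V).
Hypothesis linE : superop_linear E.
Hypothesis dualE : forall A B, \tr (E A *m B) = \tr (A *m Ed B).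

Let K (c d p q : Bs V) := E (delta_mx (rk c) (rk d)) (rk p) (rk q).

Lemma sext_entry (rho : Op C X) s t :
  sext V X E rho (rk s) (rk t) =
  \sum_(c : Bs V) \sum_(d : Bs V)
     rho (rk (comb c s)) (rk (comb d t)) * K c d (rest V s) (rest V t).
Proof.
rewrite mxE !rkK superop_entry // sum_ord_Bs; apply: eq_bigr => c _.
by rewrite sum_ord_Bs; apply: eq_bigr => d _; rewrite mxE !rkK.
Qed.

Lemma sext_adjoint_entry (M : Op C X) k l :
  sext V X Ed M (rk k) (rk l) =
  \sum_(a : Bs V) \sum_(b : Bs V)
     K (rest V l) (rest V k) a b * M (rk (comb b k)) (rk (comb a l)).
Proof.
rewrite mxE !rkK (adjoint_entry _ _ _ dualE) sum_ord_Bs; apply: eq_bigr => a _.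
by rewrite sum_ord_Bs; apply: eq_bigr => b _; rewrite mxE !rkK.
Qed.

Hypothesis VX : (V `<=` X)%fset.

Lemma sext_adjoint (M rho : Op C X) :
  \tr (M *m sext V X E rho) = \tr (sext V X Ed M *m rho).
Proof.
pose f u d v c := M (rk u) (rk v) * rho (rk (comb c v)) (rk (comb d u)) *
                  K c d (rest V v) (rest V u).
have -> : \tr (M *m sext V X E rho) = \sum_u \sum_d \sum_v \sum_c f u d v c.
  rewrite mxtrace_mul_Bs; apply: eq_bigr => u _.
  transitivity (\sum_v \sum_d \sum_c f u d v c); last by rewrite exchange_big.
  apply: eq_bigr => v _; rewrite sext_entry exchange_big big_distrr.
  apply: eq_bigr => d _; rewrite big_distrr.
  by apply: eq_bigr => c _; exact: mulrA.
(* reindex both (v, c) and (u, d) along the involution (s, c) |-> (comb c s, rest V s) *)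
rewrite sum_comb_rest //.
under eq_bigr => k _ do under eq_bigr => b _ do rewrite sum_comb_rest //.
rewrite mxtrace_mul_Bs; apply: eq_bigr => k _; rewrite exchange_big.
apply: eq_bigr => l _; rewrite sext_adjoint_entry big_distrl exchange_big.
apply: eq_bigr => a _; rewrite big_distrl; apply: eq_bigr => b _.
by rewrite /f !rest_comb // !comb_rest_comb // mulrC mulrA.
Qed.

End Lifting.

(** * Positive operators *)

Section Adjoint.
Variable C : numClosedFieldType.

Lemma hadjE m n (A : 'M[C]_(m, n)) : hadj A = A ^t*.
Proof. by []. Qed.

Lemma hadj_mul m n p (A : 'M[C]_(m, n)) (B : 'M[C]_(n, p)) :
  hadj (A *m B) = hadj B *m hadj A.
Proof. by rewrite !hadjE trmx_mul map_mxM. Qed.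

Lemma hadjK m n (A : 'M[C]_(m, n)) : hadj (hadj A) = A.
Proof. exact: trmxCK. Qed.

Lemma hadjD m n (A B : 'M[C]_(m, n)) : hadj (A + B) = hadj A + hadj B.
Proof. by rewrite !hadjE linearD /= map_mxD. Qed.

Lemma hadjB m n (A B : 'M[C]_(m, n)) : hadj (A - B) = hadj A - hadj B.
Proof. by rewrite !hadjE linearB /= map_mxB. Qed.

Lemma hadjZ m n (c : C) (A : 'M[C]_(m, n)) : hadj (c *: A) = c^* *: hadj A.
Proof. by rewrite !hadjE linearZ /= map_mxZ. Qed.

Lemma hadj1 n : hadj (1%:M : 'M[C]_n) = 1%:M.
Proof. by rewrite hadjE trmx1 map_mx1. Qed.

Lemma hadj_delta n (i : 'I_n) : hadj (delta_mx i 0 : 'cV[C]_n) = delta_mx 0 i.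
Proof.
apply/matrixP => k l; rewrite !mxE.
by case: (k == 0); case: (l == i); rewrite /= ?conjC0 ?conjC1.
Qed.

End Adjoint.

Section Positive.
Variables (C : numClosedFieldType) (n : nat).
Implicit Types (A B P : 'M[C]_n) (x y : 'cV[C]_n).

Definition hform A x y := (hadj x *m A *m y) 0 0.

Lemma hform_delta A i j : hform A (delta_mx i 0) (delta_mx j 0) = A i j.
Proof. by rewrite /hform hadj_delta -rowE -colE !mxE. Qed.

Lemma hform_mxtrace A x : hform A x x = \tr (A *m (x *m hadj x)).
Proof. by rewrite /hform mulmxA mxtrace_mulC trace_mx11 mulmxA. Qed.

Lemma hformDZ A x y c :
  hform A (x + c *: y) (x + c *: y) =
  hform A x x + c * hform A x y + c^* * hform A y x + c^* * c * hform A y y.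
Proof.
rewrite /hform hadjD hadjZ !mulmxDl !mulmxDr -!scalemxAl -!scalemxAr !mxE.
by ring.
Qed.

Lemma hform_hermC A : hadj A = A -> forall x y, hform A x y = (hform A y x)^*.
Proof.
move=> hA x y; rewrite /hform.
have -> : ((hadj y *m A *m x) 0 0)^* = hadj (hadj y *m A *m x) 0 0 by rewrite !mxE.
by rewrite !hadj_mul hadjK hA mulmxA.
Qed.

Lemma psd_herm A : psd A -> hadj A = A.
Proof.
move=> psdA; have real_hform x : (hform A x x)^* = hform A x x.
  exact/conj_Creal/ger0_real/psdA.
suff hformC : forall x y, hform A x y = (hform A y x)^*.
  by apply/matrixP => i j; rewrite !mxE -!hform_delta [RHS]hformC.
move=> x y.
(* polarization: the forms at x + y and at x + 'i y are real *)
have := real_hform (x + 1 *: y); have := real_hform (x + 'i *: y).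
rewrite !hformDZ !rmorphD !rmorphM /= !conjCK conjCi conjC1 !real_hform.
set p := hform A x y; set q := hform A y x; set a := hform A x x; set b := hform A y y.
move=> /eqP; rewrite -subr_eq0 => /eqP ei /eqP; rewrite -subr_eq0 => /eqP e1.
have e1' : p^* + q^* - p - q = 0 by rewrite -e1; ring.
have ei' : 'i * (q^* - p^* - p + q) = 0 by rewrite -ei; ring.
have : 2%:R * 'i * (q^* - p) = 0.
  by rewrite -[RHS]addr0 -{1}(mulr0 'i) -{1}e1' -ei'; ring.
by move/eqP; rewrite !mulf_eq0 pnatr_eq0 (negbTE (@neq0Ci C)) subr_eq0 => /eqP.
Qed.

Lemma quadratic_ge0_eq0 (w beta : C) : 0 <= beta ->
  (forall c : C, 0 <= c * w^* + c^* * w + c^* * c * beta) -> w = 0.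
Proof.
move=> beta_ge0 H; set t := (beta + 1)^-1.
have t_gt0 : 0 < t by rewrite invr_gt0 ltr_wpDl.
have tC : t^* = t by exact/conj_Creal/gtr0_real.
have tbeta : t * (beta + 1) = 1 by rewrite mulVf // gt_eqF // ltr_wpDl.
have := H (- (t * w)); rewrite rmorphN rmorphM /= tC.
(* for c = - t w the quadratic is - t^2 (beta + 2) |w|^2 *)
have -> : - (t * w) * w^* + - (t * w^*) * w + - (t * w^*) * - (t * w) * beta =
   - (t * t * (beta + 2%:R) * (w * w^*)) + 2%:R * t * (w * w^*) * (t * (beta + 1) - 1).
  by ring.
rewrite tbeta subrr mulr0 addr0 oppr_ge0 pmulr_rle0; last first.
  by rewrite !mulr_gt0 // ltr_wpDl.
move=> ww_le0; have /eqP : w * w^* = 0 by apply/le_anti; rewrite ww_le0 mul_conjC_ge0.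
by rewrite mul_conjC_eq0 => /eqP.
Qed.

Lemma psd_hform_eq0 A x : psd A -> hform A x x = 0 -> A *m x = 0.
Proof.
move=> psdA xAx; apply/colP => k; rewrite [RHS]mxE.
have <- : hform A (delta_mx k 0) x = (A *m x) k 0.
  by rewrite /hform hadj_delta -mulmxA -rowE mxE.
apply: (@quadratic_ge0_eq0 _ (hform A (delta_mx k 0) (delta_mx k 0))); first exact: psdA.
move=> c; have := psdA (x + c *: delta_mx k 0).
by rewrite -/(hform _ _ _) hformDZ xAx add0r (hform_hermC (psd_herm psdA) x).
Qed.

Lemma psd_diag A i : psd A -> 0 <= A i i.
Proof. by move=> psdA; rewrite -hform_delta; apply: psdA. Qed.

Lemma psd_mxtrace_ge0 A : psd A -> 0 <= \tr A.
Proof. by move=> psdA; apply: sumr_ge0 => i _; apply: psd_diag. Qed.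

Lemma psd_mxtrace_eq0 A : psd A -> \tr A = 0 -> A = 0.
Proof.
move=> psdA /eqP; rewrite psumr_eq0 => [/allP diag0|i _]; last exact: psd_diag.
apply/matrixP => i j; rewrite [RHS]mxE.
have : A *m (delta_mx j 0 : 'cV[C]_n) = 0.
  by apply: psd_hform_eq0 => //; rewrite hform_delta; apply/eqP/diag0/mem_index_enum.
by rewrite -colE => /colP /(_ i); rewrite !mxE.
Qed.

Lemma psd_sum (I : Type) (r : seq I) (P : pred I) (F : I -> 'M[C]_n) :
  (forall i, P i -> psd (F i)) -> psd (\sum_(i <- r | P i) F i).
Proof.
move=> psdF x; elim/big_rec: _ => [|i A Pi xAx].
  by rewrite mulmx0 mul0mx mxE.
by rewrite mulmxDr mulmxDl mxE addr_ge0 //; apply: psdF.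
Qed.

Lemma psd_scale c A : 0 <= c -> psd A -> psd (c *: A).
Proof. by move=> c_ge0 psdA x; rewrite -scalemxAr -scalemxAl mxE mulr_ge0. Qed.

End Positive.

Lemma psd_congr (C : numClosedFieldType) m n (A : 'M[C]_m) (B : 'M[C]_(m, n)) :
  psd A -> psd (hadj B *m A *m B).
Proof.
move=> psdA x.
by rewrite (_ : hadj x *m _ *m x = hadj (B *m x) *m A *m (B *m x)) // hadj_mul !mulmxA.
Qed.

Lemma psd1 (C : numClosedFieldType) n : psd (1%:M : 'M[C]_n).
Proof.
move=> x; rewrite mulmx1 mxE; apply: sumr_ge0 => i _.
by rewrite !mxE mulrC mul_conjC_ge0.
Qed.

Lemma psd_rank1 (C : numClosedFieldType) n (x : 'cV[C]_n) : psd (x *m hadj x).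
Proof. by have := psd_congr (hadj x) (@psd1 C 1); rewrite hadjK mulmx1. Qed.

Lemma proj_psd (C : numClosedFieldType) n (P : 'M[C]_n) : proj P -> psd P.
Proof. by case=> PP hP; have := psd_congr P (@psd1 C n); rewrite mulmx1 hP PP. Qed.

Lemma proj_compl (C : numClosedFieldType) n (P : 'M[C]_n) : proj P -> proj (1%:M - P).
Proof.
case=> PP hP; split; last by rewrite hadjB hadj1 hP.
by rewrite mulmxBl !mulmxBr !mul1mx mulmx1 PP subrr subr0.
Qed.

Lemma psd_mxsub (C : numClosedFieldType) m n (f : 'I_n -> 'I_m) (A : 'M[C]_m) :
  psd A -> psd (mxsub f f A).
Proof.
move=> psdA; have -> : mxsub f f A = hadj (colsub f 1%:M) *m A *m colsub f 1%:M.
  have -> : hadj (colsub f 1%:M) = rowsub f (1%:M : 'M[C]_m).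
    by apply/matrixP => i j; rewrite !mxE eq_sym conjC_nat.
  rewrite mulmx_colsub mulmx1 mul_rowsub_mx mul1mx.
  by apply/matrixP => i j; rewrite !mxE.
exact: psd_congr.
Qed.

Section Spectral.
Variables (C : numClosedFieldType) (n : nat).
Implicit Types (A B P : 'M[C]_n) (x y : 'cV[C]_n).

Lemma herm_spectral A : hadj A = A ->
  [/\ A = hadj (spectralmx A) *m diag_mx (spectral_diag A) *m spectralmx A,
      spectralmx A *m hadj (spectralmx A) = 1%:M &
      hadj (spectralmx A) *m spectralmx A = 1%:M].
Proof.
move=> hA; have Uu : spectralmx A \is unitarymx by apply: spectral_unitarymx.
split; last by rewrite hadjE -invmx_unitary // mulVmx // unitarymx_unit.
  by rewrite hadjE -invmx_unitary //; apply/orthomx_spectralP/normalmxP; rewrite -hadjE hA.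
exact/unitarymxP.
Qed.

Lemma mxtrace_psd_mul_ge0 A B : psd A -> psd B -> 0 <= \tr (A *m B).
Proof.
move=> psdA psdB; have [eB UU _] := herm_spectral (psd_herm psdB).
set U := spectralmx B in eB UU; set d := spectral_diag B in eB.
have -> : \tr (A *m B) = \tr ((U *m A *m hadj U) *m diag_mx d).
  by rewrite {1}eB !mulmxA mxtrace_mulC !mulmxA -[_ *m diag_mx d]mulmxA.
have UBU : U *m B *m hadj U = diag_mx d.
  by rewrite eB !mulmxA UU mul1mx -mulmxA UU mulmx1.
rewrite mul_mx_diag /mxtrace; apply: sumr_ge0 => i _; rewrite mxE.
apply: mulr_ge0; first by apply: psd_diag; rewrite -{1}(hadjK U); apply: psd_congr.
by have := psd_diag i (psd_congr (hadj U) psdB); rewrite hadjK UBU mxE eqxx mulr1n.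
Qed.

Lemma mxtrace_proj_le P A : proj P -> psd A -> \tr (P *m A) <= \tr A.
Proof.
move=> projP psdA; rewrite -subr_ge0 -{1}[A]mul1mx -linearB -mulmxBl.
exact: mxtrace_psd_mul_ge0 (proj_psd (proj_compl projP)) psdA.
Qed.

Lemma psd_mul_proj_eq0 A P : psd A -> proj P -> \tr (A *m P) = 0 -> A *m P = 0.
Proof.
move=> psdA [PP hP] trAP0.
have PAP0 : hadj P *m A *m P = 0.
  apply: psd_mxtrace_eq0; first exact: psd_congr.
  by rewrite hP -mulmxA mxtrace_mulC -mulmxA PP.
apply/matrixP => i j; rewrite [RHS]mxE.
have : A *m (P *m (delta_mx j 0 : 'cV[C]_n)) = 0.
  apply: psd_hform_eq0 => //; rewrite /hform hadj_mul !mulmxA.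
  by rewrite -(mulmxA _ (hadj P)) -(mulmxA _ (hadj P *m A)) PAP0 mulmx0 mul0mx mxE.
by rewrite mulmxA -colE => /colP /(_ i); rewrite !mxE.
Qed.

Lemma proj_row_space k (M : 'M[C]_(k, n)) :
  exists P : 'M[C]_n, proj P /\ forall x, img P x <-> (x^T <= M)%MS.
Proof.
pose B := schmidt (row_base M).
have Bu : B \is unitarymx by apply: schmidt_unitarymx; exact: rank_leq_col.
have BM : (B :=: M)%MS.
  by apply: eqmx_trans (eq_row_base M); apply: eqmx_schmidt_free; exact: row_base_free.
pose Bc := map_mx Num.conj B.
have hBc : hadj Bc = B^T by apply/matrixP => i j; rewrite !mxE conjCK.
have BcB : Bc *m hadj Bc = 1%:M.
  rewrite hBc -(map_mx1 Num.conj) -(unitarymxP Bu) map_mxM; congr (_ *m _); symmetry.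
  by apply/matrixP => i j; rewrite !mxE; exact: conjCK.
exists (hadj Bc *m Bc); split.
  split; first by rewrite mulmxA -(mulmxA _ Bc) BcB mulmx1.
  by rewrite hadj_mul hadjK.
move=> x; split.
  by case=> y ->; rewrite hBc !trmx_mul trmxK mulmxA -BM submxMl.
move=> xM; have /submxP [z ez] : (x^T <= B)%MS by rewrite BM.
exists x; have -> : x = hadj Bc *m z^T by rewrite hBc -trmx_mul -ez trmxK.
by rewrite -mulmxA (mulmxA Bc) BcB mul1mx.
Qed.

Lemma proj_kernel A : exists P : 'M[C]_n, proj P /\ forall x, img P x <-> A *m x = 0.
Proof.
have [P [projP imgP]] := proj_row_space (kermx A^T).
exists P; split => // x; rewrite imgP sub_kermx -trmx_mul.
by split => [/eqP/(congr1 trmx)|->]; rewrite ?trmxK ?trmx0.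
Qed.

Lemma proj_range A :
  exists P : 'M[C]_n, proj P /\ forall x, img P x <-> exists y, x = A *m y.
Proof.
have [P [projP imgP]] := proj_row_space A^T.
exists P; split => // x; rewrite imgP; split.
  by case/submxP => z ez; exists z^T; rewrite -(trmxK x) ez trmx_mul trmxK.
by case=> y ->; rewrite trmx_mul submxMl.
Qed.

Lemma supp_range A : hadj A = A -> forall x, supp A x <-> exists y, x = A *m y.
Proof.
move=> hA x; split.
  case=> k [vs [cs [eigen ->]]].
  apply: (big_ind (fun S => exists y, S = A *m y)).
  - by exists 0; rewrite mulmx0.
  - by move=> _ _ [y1 ->] [y2 ->]; exists (y1 + y2); rewrite mulmxDr.
  move=> i _; have [_ [l [l0 Av]]] := eigen i.
  exists (cs i *: (l^-1 *: vs i)).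
  by rewrite -!scalemxAr Av !scalerA -mulrA mulVf // mulr1.
case=> y ->; have [eA UU hUU] := herm_spectral hA.
set U := spectralmx A in eA UU hUU; set d := spectral_diag A in eA.
pose v i := hadj U *m (delta_mx i 0 : 'cV[C]_n).
have Av i : A *m v i = d 0 i *: v i.
  rewrite /v eA -!mulmxA (mulmxA U) UU mul1mx scalemxAr; congr (_ *m _).
  by apply/matrixP => k l; rewrite mul_diag_mx !mxE; case: eqP => [->|]; rewrite ?mulr0.
have v_neq0 i : v i != 0.
  apply: contraTneq isT => vi0; have : U *m v i = 0 by rewrite vi0 mulmx0.
  rewrite /v mulmxA UU mul1mx => /matrixP /(_ i 0).
  by rewrite !mxE !eqxx => /eqP; rewrite oner_eq0.
have -> : A *m y = \sum_i (d 0 i * (U *m y) i 0) *: v i.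
  rewrite -{1}[y]mul1mx -hUU -mulmxA {1}(matrix_sum_delta (U *m y)) !mulmx_sumr.
  by apply: eq_bigr => i _; rewrite big_ord1 -!scalemxAr -/(v i) Av scalerA mulrC.
case: (pickP (fun i => d 0 i != 0)) => [i0 di0|d0]; last first.
  exists 0, (fun _ => 0), (fun _ => 0); split; first by case.
  by rewrite big_ord0 big1 // => i _; move/negbFE/eqP: (d0 i) => ->; rewrite mul0r scale0r.
(* pad the terms with eigenvalue 0 by the eigenvector v i0, with coefficient 0 *)
exists n, (fun i => if d 0 i != 0 then v i else v i0),
  (fun i => if d 0 i != 0 then d 0 i * (U *m y) i 0 else 0); split.
  by move=> i; case: ifP => di; split => //; [exists (d 0 i) | exists (d 0 i0)].
by apply: eq_bigr => i _; case: ifP => // /negbFE /eqP ->; rewrite mul0r !scale0r.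
Qed.

End Spectral.

(** * Partial trace and extension *)

Section PartialTrace.
Variable C : numClosedFieldType.

Definition ptrace (Y X : {fset nat}) (rho : Op C X) : Op C Y :=
  \matrix_(i, j) \sum_(r : Bs X | rest Y r == ev i) rho (rk r) (rk (comb (ev j) r)).

Lemma ptraceE (Y X : {fset nat}) (rho : Op C X) a b :
  ptrace Y rho (rk a) (rk b) = \sum_(r : Bs X | rest Y r == a) rho (rk r) (rk (comb b r)).
Proof. by rewrite mxE !rkK. Qed.

Lemma extE (Y X : {fset nat}) (M : Op C Y) s t :
  ext Y X M (rk s) (rk t) =
  if agree_off Y s t then M (rk (rest Y s)) (rk (rest Y t)) else 0.
Proof. by rewrite mxE !rkK. Qed.

Lemma ext_id (Y : {fset nat}) (M : Op C Y) : ext Y Y M = M.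
Proof.
apply: matrix_BsP => s t; rewrite extE !rest_id.
suff -> : agree_off Y s t by [].
by apply/forallP => x; rewrite (valP x).
Qed.

Lemma sext_id (V : {fset nat}) (E : Op C V -> Op C V) rho : sext V V E rho = E rho.
Proof.
apply/matrixP => i j; rewrite mxE !rest_id !evK; congr (E _ _ _).
by apply/matrixP => a b; rewrite mxE !comb_id !evK.
Qed.

Variables (Y X : {fset nat}).

Lemma mxtrace_ptrace (rho : Op C X) : \tr (ptrace Y rho) = \tr rho.
Proof.
rewrite /mxtrace !sum_ord_Bs; under eq_bigr do rewrite ptraceE.
by rewrite sum_fibers; apply: eq_bigr => r _; rewrite comb_rest.
Qed.

Hypothesis YX : (Y `<=` X)%fset.

Lemma mxtrace_ext_mul (M : Op C Y) (rho : Op C X) :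
  \tr (ext Y X M *m rho) = \tr (M *m ptrace Y rho).
Proof.
rewrite !mxtrace_mul_Bs exchange_big /=.
transitivity (\sum_(t : Bs X) \sum_(a : Bs Y)
                M (rk a) (rk (rest Y t)) * rho (rk t) (rk (comb a t))).
  apply: eq_bigr => t _.
  pose f s := M (rk (rest Y s)) (rk (rest Y t)) * rho (rk t) (rk s).
  transitivity (\sum_(a : Bs Y) f (comb a t)); last first.
    by apply: eq_bigr => a _; rewrite /f rest_comb.
  rewrite -sum_agree_off //; apply: eq_bigr => s _.
  by rewrite extE; case: ifP; rewrite ?mul0r.
rewrite exchange_big /=; apply: eq_bigr => a _.
rewrite -(sum_fibers (fun t b => M (rk a) (rk b) * rho (rk t) (rk (comb a t)))).
by apply: eq_bigr => b _; rewrite ptraceE big_distrr.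
Qed.

Lemma ptrace_mxsub (z : Bs Y) (rho : Op C X) :
  ptrace Y rho = \sum_(r : Bs X | rest Y r == z)
                   mxsub (fun i => rk (comb (ev i) r)) (fun j => rk (comb (ev j) r)) rho.
Proof.
apply: matrix_BsP => a b; rewrite ptraceE summxE.
rewrite -(reindex_rest_comb YX z a (fun r => rho (rk r) (rk (comb b r)))).
by apply: eq_bigr => r _; rewrite mxE !rkK comb_comb.
Qed.

Lemma psd_ptrace (rho : Op C X) : psd rho -> psd (ptrace Y rho).
Proof.
move=> psdrho; rewrite (ptrace_mxsub [ffun => false]).
by apply: psd_sum => r _; apply: psd_mxsub.
Qed.

End PartialTrace.

Lemma ptrace_sext (C : numClosedFieldType) (V Y X : {fset nat})
    (VY : (V `<=` Y)%fset) (YX : (Y `<=` X)%fset)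
    (E : Op C V -> Op C V) (rho : Op C X) :
  superop_linear E -> ptrace Y (sext V X E rho) = sext V Y E (ptrace Y rho).
Proof.
move=> linE; have VX := fsubset_trans VY YX.
apply: matrix_BsP => a b; rewrite ptraceE sext_entry //.
under eq_bigr do rewrite sext_entry //.
rewrite exchange_big /=; apply: eq_bigr => c _.
rewrite exchange_big /=; apply: eq_bigr => d _.
rewrite ptraceE big_distrl /=.
rewrite -(reindex_rest_comb YX a (comb c a)
   (fun r => rho (rk r) (rk (comb (comb d b) r)) *
             E (delta_mx (rk c) (rk d)) (rk (rest V a)) (rk (rest V b)))).
apply: eq_bigr => r /eqP ra.
rewrite -(rest_rest VY YX) ra -(rest_rest VY YX (comb b r)) rest_comb //.
by rewrite comb_comb -!(comb_nested VY) -ra comb_rest.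
Qed.

Section Extension.
Variables (C : numClosedFieldType) (W Y : {fset nat}).

Lemma hadj_ext (A : Op C W) : hadj (ext W Y A) = ext W Y (hadj A).
Proof.
apply: matrix_BsP => s t; rewrite !mxE !rkK -/(agree_off W s t) -/(agree_off W t s).
by rewrite agree_offC; case: ifP; rewrite ?conjC0 // !mxE.
Qed.

Hypothesis WY : (W `<=` Y)%fset.

Lemma ext_mul (A B : Op C W) : ext W Y A *m ext W Y B = ext W Y (A *m B).
Proof.
apply: matrix_BsP => s t; rewrite mxE sum_ord_Bs.
pose f u := A (rk (rest W s)) (rk (rest W u)) * ext W Y B (rk u) (rk t).
transitivity (\sum_(u : Bs Y) if agree_off W u s then f u else 0).
  by apply: eq_bigr => u _; rewrite extE agree_offC; case: ifP; rewrite ?mul0r.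
rewrite sum_agree_off // extE; case: ifP => st; last first.
  by apply: big1 => a _; rewrite /f extE agree_off_comb // st mulr0.
rewrite mxE sum_ord_Bs; apply: eq_bigr => a _.
by rewrite /f extE agree_off_comb // st !rest_comb.
Qed.

Lemma proj_ext (Q : Op C W) : proj Q -> proj (ext W Y Q).
Proof. by case=> QQ hQ; split; rewrite ?ext_mul ?hadj_ext ?QQ ?hQ. Qed.

End Extension.

(** * Effects and weakest preconditions *)

Section Effects.
Variables (C : numClosedFieldType) (n : nat).
Implicit Types (A K P Q T : 'M[C]_n) (x y : 'cV[C]_n).

Lemma eq_mulmx_cV m (A B : 'M[C]_(m, n)) : (forall y, A *m y = B *m y) -> A = B.
Proof.
move=> AB; apply/matrixP => i j.
by have /colP /(_ i) := AB (delta_mx j 0); rewrite -!colE !mxE.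
Qed.

Lemma proj_img_fix P x : proj P -> img P x -> P *m x = x.
Proof. by case=> PP _ [y ->]; rewrite mulmxA PP. Qed.

Lemma pdens_scale A : psd A -> exists2 c : C, 0 < c & pdens (c *: A).
Proof.
move=> psdA; have trA_ge0 := psd_mxtrace_ge0 psdA.
have tr1_gt0 : 0 < 1 + \tr A by rewrite ltr_pwDl.
exists (1 + \tr A)^-1; first by rewrite invr_gt0.
split; first by apply: psd_scale => //; rewrite invr_ge0 ltW.
by rewrite mxtraceZ ler_pdivrMl // mulr1 lerDr.
Qed.

Lemma largest_proj_iff (Pr Pr' : 'M[C]_n -> Prop) P :
  (forall P', Pr P' <-> Pr' P') -> largest_proj Pr P -> largest_proj Pr' P.
Proof.
move=> PrE [projP PrP maxP]; split => [//||P' projP' /PrE]; first exact/PrE.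
exact: maxP.
Qed.

Lemma smallest_proj_iff (Pr Pr' : 'M[C]_n -> Prop) P :
  (forall P', Pr P' <-> Pr' P') -> smallest_proj Pr P -> smallest_proj Pr' P.
Proof.
move=> PrE [projP PrP minP]; split => [//||P' projP' /PrE]; first exact/PrE.
exact: minP.
Qed.

Lemma largest_proj_effect T P :
  psd T -> psd (1%:M - T) -> proj P -> sp_eq (img P) (fixsp T) ->
  largest_proj (fun P' => forall s, pdens s -> \tr (P' *m s) <= \tr (T *m s)) P.
Proof.
move=> psdT psd1T projP imgP; have [PP hP] := projP.
have TP : T *m P = P by apply: eq_mulmx_cV => y; rewrite -mulmxA; apply/imgP; exists y.
have PT : P *m T = P by rewrite -hP -(psd_herm psdT) -hadj_mul TP.
split => // [s [psds _]|P' projP' dominated x P'x].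
  have -> : T = P + hadj (1%:M - P) *m T *m (1%:M - P).
    rewrite hadjB hadj1 hP mulmxBl mul1mx PT mulmxBl !mulmxBr !mulmx1 TP PP.
    by rewrite subrr subr0 addrC subrK.
  by rewrite mulmxDl mxtraceD lerDl mxtrace_psd_mul_ge0 //; apply: psd_congr.
apply/imgP; have P'xx := proj_img_fix projP' P'x.
have [c c_gt0 pdens_cx] := pdens_scale (psd_rank1 x).
have := dominated _ pdens_cx; rewrite -!scalemxAr !mxtraceZ ler_pM2l //.
rewrite -!hform_mxtrace /hform -mulmxA P'xx => xTx.
have : hform (1%:M - T) x x = 0.
  apply/le_anti; rewrite psd1T andbT /hform mulmxBr mulmx1 mulmxBl mxE [X in _ + X]mxE.
  by rewrite subr_le0.
by move/(psd_hform_eq0 psd1T)/eqP; rewrite mulmxBl mul1mx subr_eq0 => /eqP/esym.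
Qed.

(* tr (K Q) = 0 forces K Q = 0, and then 1 - K - Q = (1 - Q) (1 - K) (1 - Q). *)
Lemma psd_compl_sub_proj K Q :
  psd K -> psd (1%:M - K) -> proj Q -> \tr (K *m Q) = 0 -> psd (1%:M - K - Q).
Proof.
move=> psdK psd1K projQ trKQ; have [QQ hQ] := projQ.
have KQ := psd_mul_proj_eq0 psdK projQ trKQ.
have QK : Q *m K = 0 by rewrite -(psd_herm psdK) -hQ -hadj_mul KQ hadjE trmx0 map_mx0.
have -> : 1%:M - K - Q = hadj (1%:M - Q) *m (1%:M - K) *m (1%:M - Q).
  rewrite hadjB hadj1 hQ !mulmxBl !mulmxBr !mul1mx !mulmx1 !mulmxBl mul1mx QK KQ QQ.
  by rewrite mul0mx !subr0 subrr subr0.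
exact: psd_congr.
Qed.

Lemma proj_mul_psd_id A P :
  psd A -> proj P -> \tr ((1%:M - P) *m A) <= 0 -> P *m A = A.
Proof.
move=> psdA projP tr_le0.
have tr0 : \tr (A *m (1%:M - P)) = 0.
  rewrite mxtrace_mulC; apply/le_anti; rewrite tr_le0 mxtrace_psd_mul_ge0 //.
  exact/proj_psd/proj_compl.
have := psd_mul_proj_eq0 psdA (proj_compl projP) tr0.
rewrite mulmxBr mulmx1 => /eqP; rewrite subr_eq0 => /eqP AP.
by rewrite -(psd_herm psdA) -(proj2 projP) -hadj_mul -AP.
Qed.

End Effects.

Section Duality.
Variables (C : numClosedFieldType) (n : nat).
Variables (G F : 'M[C]_n -> 'M[C]_n) (Q : 'M[C]_n).
Hypotheses (linG : superop_linear G) (psdG : forall s, psd s -> psd (G s))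
  (trG : forall s, psd s -> \tr (G s) <= \tr s)
  (dualG : forall M s, \tr (M *m G s) = \tr (F M *m s)) (projQ : proj Q).

Lemma dual_proj_effect R : proj R -> psd (F R) /\ psd (1%:M - F R).
Proof.
move=> projR; split => x; rewrite -/(hform _ x x) hform_mxtrace.
  by rewrite -dualG; apply: mxtrace_psd_mul_ge0; [exact: proj_psd | exact/psdG/psd_rank1].
rewrite mulmxBl mul1mx linearB /= -dualG subr_ge0.
exact: le_trans (mxtrace_proj_le projR (psdG (psd_rank1 x))) (trG (psd_rank1 x)).
Qed.

Lemma mxtrace_dual_compl R s :
  \tr (R *m G s) + \tr s - \tr (G s) = \tr ((1%:M - F (1%:M - R)) *m s).
Proof.
rewrite mulmxBl mul1mx linearB /= -dualG mulmxBl mul1mx linearB /=.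
by rewrite opprB addrCA addrA.
Qed.

Lemma wp_proj : exists P, sp_eq (img P) (fixsp (F Q)) /\
  largest_proj (fun P' => forall s, pdens s -> \tr (P' *m s) <= \tr (Q *m G s)) P.
Proof.
have [P [projP imgP]] := proj_kernel (F Q - 1%:M).
have fixP : sp_eq (img P) (fixsp (F Q)).
  by move=> x; rewrite imgP mulmxBl mul1mx; split => [/eqP|->]; rewrite ?subrr // subr_eq0 => /eqP.
have [psdFQ psd1FQ] := dual_proj_effect projQ.
exists P; split => //; apply: largest_proj_iff (largest_proj_effect psdFQ psd1FQ projP fixP).
by move=> P'; split => dom s /dom; rewrite dualG.
Qed.

Lemma wlp_proj : exists P, sp_eq (img P) (nullsp (F (1%:M - Q))) /\
  largest_proj (fun P' => forall s, pdens s ->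
                  \tr (P' *m s) <= \tr (Q *m G s) + \tr s - \tr (G s)) P.
Proof.
set N := F (1%:M - Q); have [psdN psd1N] := dual_proj_effect (proj_compl projQ).
have [P [projP imgP]] := proj_kernel N.
have nullP : sp_eq (img P) (nullsp N).
  move=> x; rewrite imgP; split => [Nx|/(psd_hform_eq0 psdN) //].
  by rewrite /nullsp -mulmxA Nx mulmx0 mxE.
have fixP : sp_eq (img P) (fixsp (1%:M - N)).
  move=> x; rewrite imgP /fixsp mulmxBl mul1mx; split => [->|]; first by rewrite subr0.
  by move/(canRL (addKr x))/eqP; rewrite addNr oppr_eq0 => /eqP.
have psd1N' : psd (1%:M - (1%:M - N)) by rewrite opprB addrC subrK.
exists P; split => //; apply: largest_proj_iff (largest_proj_effect psd1N psd1N' projP fixP).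
by move=> P'; rewrite /N; split => dom s /dom; rewrite mxtrace_dual_compl.
Qed.

Lemma sp_proj : exists R, sp_eq (img R) (supp (G Q)) /\
  smallest_proj (fun R' => forall s, pdens s ->
                   \tr (Q *m s) <= \tr (R' *m G s) + \tr s - \tr (G s)) R.
Proof.
have psdGQ : psd (G Q) by apply/psdG/proj_psd.
have [R [projR imgR]] := proj_range (G Q).
have RGQ : R *m G Q = G Q.
  by apply: eq_mulmx_cV => y; rewrite -mulmxA; apply: proj_img_fix => //; apply/imgR; exists y.
exists R; split; first by move=> x; rewrite imgR supp_range // psd_herm.
split => // [s [psds _]|R' projR' covers x].
  have [psdK psd1K] := dual_proj_effect (proj_compl projR).
  have trKQ : \tr (F (1%:M - R) *m Q) = 0 by rewrite -dualG mulmxBl mul1mx RGQ subrr mxtrace0.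
  rewrite mxtrace_dual_compl -subr_ge0 -linearB -mulmxBl.
  exact: mxtrace_psd_mul_ge0 (psd_compl_sub_proj psdK psd1K projQ trKQ) psds.
(* test the triple on a multiple of Q itself *)
have [c c_gt0 pdens_cQ] := pdens_scale (proj_psd projQ).
have := covers _ pdens_cQ; rewrite (superopZ linG) -!scalemxAr !mxtraceZ -mulrDr -mulrBr.
rewrite ler_pM2l // (proj1 projQ) addrAC [X in _ <= X]addrC lerDl subr_ge0 => trR'.
have R'GQ : R' *m G Q = G Q.
  by apply: proj_mul_psd_id => //; rewrite mulmxBl mul1mx linearB subr_le0.
by rewrite imgR => -[y ->]; exists (G Q *m y); rewrite mulmxA R'GQ.
Qed.

End Duality.

(** * Hoare triples on extended registers *)

Section Reduction.
Variables (C : numClosedFieldType) (V W : {fset nat}) (E : Op C V -> Op C V).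
Hypothesis DProgE : is_DProg E.
Let Y := (V `|` W)%fset.
Let VY : (V `<=` Y)%fset := fsubsetUl V W.

Lemma DProg_linear : superop_linear E.
Proof. by case: DProgE. Qed.

Lemma DProg_sext_psd (rho : Op C Y) : psd rho -> psd (sext V Y E rho).
Proof. by case: DProgE => _ psdE _; apply: psdE. Qed.

Lemma DProg_sext_mxtrace_le (rho : Op C Y) : psd rho -> \tr (sext V Y E rho) <= \tr rho.
Proof.
case: DProgE => linE _ trE psdrho.
rewrite -(mxtrace_ptrace V) ptrace_sext ?fsubset_refl // sext_id -[leRHS](mxtrace_ptrace V).
exact/trE/psd_ptrace.
Qed.

Lemma sat_tot_iff (P Q : Op C Y) :
  sat_tot E P Q <-> forall s, pdens s -> \tr (P *m s) <= \tr (Q *m sext V Y E s).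
Proof.
split => [sat s pdens_s|sat X YX rho [psdrho trrho]].
  by have := sat Y (fsubset_refl _) s pdens_s; rewrite !ext_id.
rewrite !mxtrace_ext_mul // ptrace_sext //; last exact: DProg_linear.
by apply: sat; split; [exact: psd_ptrace | rewrite mxtrace_ptrace].
Qed.

Lemma sat_par_iff (P Q : Op C Y) :
  sat_par E P Q <-> forall s, pdens s ->
    \tr (P *m s) <= \tr (Q *m sext V Y E s) + \tr s - \tr (sext V Y E s).
Proof.
split => [sat s pdens_s|sat X YX rho [psdrho trrho]].
  by have := sat Y (fsubset_refl _) s pdens_s; rewrite !ext_id.
rewrite !mxtrace_ext_mul // -(mxtrace_ptrace Y rho) -(mxtrace_ptrace Y (sext V X E rho)).
rewrite ptrace_sext //; last exact: DProg_linear.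
by apply: sat; split; [exact: psd_ptrace | rewrite mxtrace_ptrace].
Qed.

End Reduction.

Theorem lemma4p6 (C : numClosedFieldType) (V W : {fset nat})
    (E Edag : Op C V -> Op C V) (Q : Op C W) :
  is_DProg E ->
  (forall A B : Op C V, \tr (E A *m B) = \tr (A *m Edag B)) ->
  proj Q ->
  (* wp.E.Q = E(E^dagger(Q)) *)
  (exists P : Op C (V `|` W)%fset,
     sp_eq (img P) (fixsp (sext V (V `|` W)%fset Edag (ext W (V `|` W)%fset Q))) /\
     largest_proj (fun P' => sat_tot E P' (ext W (V `|` W)%fset Q)) P) /\
  (* wlp.E.Q = N(E^dagger(Q^perp)) *)
  (exists P : Op C (V `|` W)%fset,
     sp_eq (img P)
       (nullsp (sext V (V `|` W)%fset Edag (1%:M - ext W (V `|` W)%fset Q))) /\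
     largest_proj (fun P' => sat_par E P' (ext W (V `|` W)%fset Q)) P) /\
  (* sp.E.Q = support of E(Q) *)
  (exists R : Op C (V `|` W)%fset,
     sp_eq (img R) (supp (sext V (V `|` W)%fset E (ext W (V `|` W)%fset Q))) /\
     smallest_proj (fun R' => sat_par E (ext W (V `|` W)%fset Q) R') R).
Proof.
move=> DProgE dualE projQ.
have linE := DProg_linear DProgE.
have projQY := proj_ext (fsubsetUr V W) projQ.
have dualG := sext_adjoint linE dualE (fsubsetUl V W).
have psdG := DProg_sext_psd DProgE (W := W); have trG := DProg_sext_mxtrace_le DProgE (W := W).
split; [|split].
- have [P [imgP maxP]] := wp_proj psdG trG dualG projQY.
  exists P; split => //; apply: largest_proj_iff maxP => P'.
  exact: iff_sym (sat_tot_iff DProgE _ _).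
- have [P [imgP maxP]] := wlp_proj psdG trG dualG projQY.
  exists P; split => //; apply: largest_proj_iff maxP => P'.
  exact: iff_sym (sat_par_iff DProgE _ _).
have [R [imgR minR]] := sp_proj (sext_linear linE) psdG trG dualG projQY.
exists R; split => //; apply: smallest_proj_iff minR => R'.
exact: iff_sym (sat_par_iff DProgE _ _).
Qed.
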